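(* Suppose $S$ is $(K,\mu,\alpha)$-decaying and $V$ is $(J,\mu,\beta)$-decaying for some $\alpha,\beta\ge4$. Then $[S,V]$ has a local decomposition which is $(cKJ,\mu)$-decaying (i.e. $(cKJ,\mu,0)$-decaying) for some constant $c$ (independent of $L,K,J,\mu$).
   Context: Let $\Lambda=\mathbb{Z}_L\times\mathbb{Z}_L$ (periodic boundary conditions), each site carrying a finite-dimensional Hilbert space, $\mathcal{H}$ their tensor product. For $r\ge1$, $\mathcal{S}(r)$ is the set of all $r\times r$ square blocks of sites ($\mathcal{S}(L)=\{\Lambda\}$, $\mathcal{S}(r)=\emptyset$ for $r>L$). A local decomposition of an operator $V$ on $\mathcal{H}$ is a family $\{V_{r,A}\}$, $r\ge1$, $A\in\mathcal{S}(r)$, with $V_{r,A}$ supported on $A$ and $V=\sum_{r\ge1}\sum_{A\in\mathcal{S}(r)}V_{r,A}$. It is $(J,\mu,\alpha)$-decaying if $\max_{r\ge1}\max_{A\in\mathcal{S}(r)}\|V_{r,A}\|\,r^{\alpha}e^{\mu r}\le J$; an operator is called $(J,\mu,\alpha)$-decaying if it has such a local decomposition, and $(J,\mu)$-decaying means $(J,\mu,0)$-decaying. *)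

From HB Require Import structures.
From mathcomp Require Import all_boot all_order all_algebra.
From mathcomp Require Import complex.
From mathcomp Require Import boolp classical_sets reals.
From mathcomp.analysis Require Import sequences exp.
Set Implicit Arguments. Unset Strict Implicit. Unset Printing Implicit Defensive.
Import Order.TTheory GRing.Theory Num.Theory.
Local Open Scope ring_scope.

(* Sites of the torus Z_L x Z_L. *)
Definition site (L : nat) := ('I_L * 'I_L)%type.

(* Product basis of H = tensor over sites of C^(d x): configurations. *)
Definition config (L : nat) (d : site L -> nat) :=
  {dffun forall x : site L, 'I_(d x)}.

(* Operators on H, as matrices in the product basis, over complex numbers R[i]. *)
Definition Op (R : realType) (L : nat) (d : site L -> nat) :=
  {ffun config d * config d -> R[i]}.

Section Ops.
Variables (R : realType) (L : nat) (d : site L -> nat).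
Local Notation C := (R[i]).
Local Notation cfg := (config d).
Local Notation op := (Op R d).

Definition opmul (A B : op) : op :=
  [ffun p => \sum_(k : cfg) A (p.1, k) * B (k, p.2)].

Definition comm (A B : op) : op := opmul A B - opmul B A.

Definition apply (A : op) (v : cfg -> C) : cfg -> C :=
  fun s => \sum_(t : cfg) A (s, t) * v t.

Definition vnorm (v : cfg -> C) : R := Num.sqrt (\sum_(s : cfg) Normc.normc (v s) ^+ 2).

Definition opnorm (A : op) : R :=
  reals.sup [set vnorm (apply A v) | v in [set v | vnorm v <= 1]]%classic.

(* A is supported on the set of sites X, i.e. A = A_X (x) 1_{complement of X},
   written out in the product basis. *)
Definition supported_on (X : {set site L}) (A : op) : Prop :=
  (forall s t : cfg, (exists2 x, x \notin X & s x != t x) -> A (s, t) = 0) /\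
  (forall s t s' t' : cfg,
      (forall x, x \in X -> s x = s' x /\ t x = t' x) ->
      (forall x, x \notin X -> s x = t x /\ s' x = t' x) ->
      A (s, t) = A (s', t')).
End Ops.

(* The r x r square block with lower-left corner x (periodic b.c.). *)
Definition block (L r : nat) (x : site L) : {set site L} :=
  [set y : site L | ((y.1 + L - x.1) %% L < r)%N && ((y.2 + L - x.2) %% L < r)%N].

(* S(r): all r x r blocks; S(L) = {Lambda}, S(r) = empty for r > L. *)
Definition blocks (L r : nat) : {set {set site L}} :=
  if (r <= L)%N then [set block r x | x : site L] else finset.set0.

Section Decay.
Variables (R : realType) (L : nat) (d : site L -> nat).

Definition local_decomposition (W : nat -> {set site L} -> Op R d) (V : Op R d) : Prop :=
  (forall r A, (1 <= r)%N -> A \in blocks L r -> supported_on A (W r A)) /\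
  V = \sum_(1 <= r < L.+1) \sum_(A in blocks L r) W r A.

Definition decomp_decaying (J mu alpha : R) (W : nat -> {set site L} -> Op R d) : Prop :=
  forall r A, (1 <= r)%N -> A \in blocks L r ->
    opnorm (W r A) * powR (r%:R) alpha * expR (mu * r%:R) <= J.

Definition decaying (J mu alpha : R) (V : Op R d) : Prop :=
  exists W, local_decomposition W V /\ decomp_decaying J mu alpha W.
End Decay.

From HB Require Import structures.
From mathcomp Require Import all_boot all_order all_algebra.
From mathcomp Require Import complex.
From mathcomp Require Import boolp classical_sets reals.
From mathcomp.analysis Require Import sequences exp.
From mathcomp Require Import perm zify lra ring.
Import Order.TTheory GRing.Theory Num.Theory.
Local Open Scope ring_scope.

(* Expand [[S, V]] into the commutators [[S_{r,A}, V_{r',B}]]; those with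
   disjoint supports vanish, and each remaining one is supported on [A :|: B],
   which fits in a block [C] of side [t = min(r + r' - 1, L)]; collect it into
   the component [W_{t,C}]. Its norm is at most [2 K J r^-4 r'^-4 e^(-mu t)],
   and at most [t^2] blocks of each side lie in [C]. Summing over [r, r'] uses
   [t^4 r^-4 r'^-4 <= 8 (r^-4 + r'^-4)], the fact that for fixed [r] at most
   [r + 1] values of [r'] give the same [t], and [sum_r (r + 1) r^-4 <= 4],
   so [W_{t,C}] has norm at most [128 K J e^(-mu t)]. *)

Lemma cauchy_schwarz (R : realDomainType) (I : finType) (a b : I -> R) :
  (\sum_i a i * b i) ^+ 2 <= (\sum_i a i ^+ 2) * (\sum_i b i ^+ 2).
Proof.
(* Lagrange's identity *)
have expand : \sum_i \sum_j (a i * b j - a j * b i) ^+ 2 =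
    \sum_i \sum_j (a i ^+ 2 * b j ^+ 2) + \sum_i \sum_j (b i ^+ 2 * a j ^+ 2)
    - 2 * \sum_i \sum_j (a i * b i * (a j * b j)).
  rewrite mulr_sumr -!big_split /= -sumrB; apply: eq_bigr => i _.
  rewrite mulr_sumr -!big_split /= -sumrB; apply: eq_bigr => j _; ring.
have : 0 <= \sum_i \sum_j (a i * b j - a j * b i) ^+ 2.
  by apply: sumr_ge0 => i _; apply: sumr_ge0 => j _; exact: sqr_ge0.
rewrite expand -!big_distrlr.
set x := \sum_i a i ^+ 2; set y := \sum_i b i ^+ 2; set z := \sum_i a i * b i.
move=> xyz; have {}xyz : 0 <= x * y + y * x - 2 * (z * z) := xyz.
nra.
Qed.

Lemma cauchy_schwarz_sqrt (R : rcfType) (I : finType) (a b : I -> R) :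
  \sum_i a i * b i <= Num.sqrt (\sum_i a i ^+ 2) * Num.sqrt (\sum_i b i ^+ 2).
Proof.
rewrite -sqrtrM; last by apply: sumr_ge0 => i _; exact: sqr_ge0.
apply: le_trans (ler_norm _) _.
rewrite -sqrtr_sqr ler_sqrt ?cauchy_schwarz //.
by apply: mulr_ge0; apply: sumr_ge0 => i _; exact: sqr_ge0.
Qed.

Section OperatorNorm.
Context {R : realType} {L : nat} {d : site L -> nat}.
Local Notation C := (R[i]).
Local Notation cfg := (config d).
Local Notation op := (Op R d).
Local Notation nc := (@Normc.normc R).

Lemma normc_ge0 (z : C) : 0 <= nc z.
Proof. by case: z => a b; exact: sqrtr_ge0. Qed.

Lemma normc_sum (I : Type) (r : seq I) (P : pred I) (F : I -> C) :
  nc (\sum_(i <- r | P i) F i) <= \sum_(i <- r | P i) nc (F i).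
Proof.
elim/big_rec2: _ => [|i x y _ Hxy]; first by rewrite Normc.normc0.
by apply: le_trans (le_normcD _ _) _; rewrite lerD2l.
Qed.

Lemma normc_real (x : R) : 0 <= x -> nc x%:C%C = x.
Proof. by move=> x_ge0 /=; rewrite expr0n /= addr0 sqrtr_sqr ger0_norm. Qed.

Lemma vnorm_ge0 (v : cfg -> C) : 0 <= vnorm v.
Proof. exact: sqrtr_ge0. Qed.

Lemma eq_vnorm {u w : cfg -> C} : u =1 w -> vnorm u = vnorm w.
Proof. by move=> uw; rewrite /vnorm; under eq_bigr do rewrite uw. Qed.

Lemma vnorm0 : vnorm (fun _ : cfg => 0 : C) = 0.
Proof. by rewrite /vnorm big1 ?sqrtr0 // => s _; rewrite Normc.normc0 expr0n. Qed.

Lemma normc_le_vnorm (v : cfg -> C) s : nc (v s) <= vnorm v.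
Proof.
rewrite /vnorm -(ger0_norm (normc_ge0 (v s))) -sqrtr_sqr ler_sqrt; last first.
  by apply: sumr_ge0 => i _; exact: sqr_ge0.
by rewrite (bigD1 s) //= lerDl; apply: sumr_ge0 => i _; exact: sqr_ge0.
Qed.

Lemma vnorm_eq0 {v : cfg -> C} : vnorm v = 0 -> v =1 (fun=> 0).
Proof.
move=> v0 s; apply: Normc.eq0_normc; apply/eqP.
by rewrite eq_le normc_ge0 andbT -v0 normc_le_vnorm.
Qed.

Lemma vnormZ (c : C) (v : cfg -> C) : vnorm (fun s => c * v s) = nc c * vnorm v.
Proof.
rewrite /vnorm; under eq_bigr do rewrite Normc.normcM exprMn.
by rewrite -mulr_sumr sqrtrM ?sqr_ge0 // sqrtr_sqr ger0_norm ?normc_ge0.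
Qed.

(* Minkowski, via Cauchy-Schwarz on the moduli. *)
Lemma vnormD (u w : cfg -> C) : vnorm (fun s => u s + w s) <= vnorm u + vnorm w.
Proof.
have sq_ge0 (f : cfg -> R) : 0 <= \sum_s f s ^+ 2.
  by apply: sumr_ge0 => i _; exact: sqr_ge0.
apply: (@le_trans _ _ (Num.sqrt (\sum_s (nc (u s) + nc (w s)) ^+ 2))).
  rewrite /vnorm ler_sqrt ?sq_ge0 //; apply: ler_sum => s _.
  by rewrite ler_sqr ?nnegrE ?addr_ge0 ?normc_ge0 ?le_normcD.
rewrite -(ger0_norm (addr_ge0 (vnorm_ge0 u) (vnorm_ge0 w))) -sqrtr_sqr.
rewrite ler_sqrt ?sqr_ge0 //.
have -> : \sum_s (nc (u s) + nc (w s)) ^+ 2 =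
    \sum_s nc (u s) ^+ 2 + \sum_s nc (w s) ^+ 2 + 2 * \sum_s nc (u s) * nc (w s).
  by rewrite mulr_sumr -!big_split /=; apply: eq_bigr => s _; ring.
have := cauchy_schwarz_sqrt _ _ (fun s => nc (u s)) (fun s => nc (w s)).
by rewrite /vnorm sqrrD !sqr_sqrtr ?sq_ge0 //; lra.
Qed.

Lemma applyD (A B : op) v s : apply (A + B) v s = apply A v s + apply B v s.
Proof. by rewrite /apply -big_split; apply: eq_bigr => t _; rewrite ffunE mulrDl. Qed.

Lemma applyN (A : op) v s : apply (- A) v s = -1 * apply A v s.
Proof.
by rewrite /apply mulr_sumr; apply: eq_bigr => t _; rewrite ffunE !mulNr mul1r.
Qed.

Lemma applyZ (A : op) (c : C) v s : apply A (fun t => c * v t) s = c * apply A v s.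
Proof. by rewrite /apply mulr_sumr; apply: eq_bigr => t _; rewrite mulrCA. Qed.

Lemma apply_opmul (A B : op) v s : apply (opmul A B) v s = apply A (apply B v) s.
Proof.
rewrite /apply; under eq_bigr do rewrite ffunE /= mulr_suml.
rewrite exchange_big /=; apply: eq_bigr => k _; rewrite mulr_sumr.
by apply: eq_bigr => t _; rewrite mulrA.
Qed.

Lemma vnorm_apply_eq0 (A : op) v : vnorm v = 0 -> vnorm (apply A v) = 0.
Proof.
move=> v0; rewrite -vnorm0; apply: eq_vnorm => s.
by rewrite /apply big1 // => t _; rewrite (vnorm_eq0 v0) mulr0.
Qed.

Definition opnorm_set (A : op) :=
  [set vnorm (apply A v) | v in [set v | vnorm v <= 1]]%classic.

Lemma opnorm_set_ubound (A : op) : has_ubound (opnorm_set A).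
Proof.
exists (Num.sqrt (\sum_s (\sum_t nc (A (s, t))) ^+ 2)) => _ [v /= v_le1 <-].
rewrite /vnorm ler_sqrt; last by apply: sumr_ge0 => i _; exact: sqr_ge0.
apply: ler_sum => s _; rewrite ler_sqr ?nnegrE ?normc_ge0 // /apply; last first.
  by apply: sumr_ge0 => t _; exact: normc_ge0.
apply: le_trans (normc_sum _ _ _ _) _; apply: ler_sum => t _.
rewrite Normc.normcM -[leRHS]mulr1 ler_wpM2l ?normc_ge0 //.
exact: le_trans (normc_le_vnorm v t) v_le1.
Qed.

Lemma opnorm_set0 (A : op) : opnorm_set A (vnorm (apply A (fun=> 0))).
Proof. by exists (fun=> 0) => //=; rewrite vnorm0. Qed.

Lemma opnorm_ge0 (A : op) : 0 <= opnorm A.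
Proof.
have := ub_le_sup (opnorm_set_ubound A) (opnorm_set0 A).
by rewrite vnorm_apply_eq0 ?vnorm0.
Qed.

Lemma opnorm_ub (A : op) v : vnorm v <= 1 -> vnorm (apply A v) <= opnorm A.
Proof. by move=> v_le1; apply: ub_le_sup; [exact: opnorm_set_ubound | exists v]. Qed.

Lemma opnorm_le (A : op) (M : R) :
  (forall v, vnorm v <= 1 -> vnorm (apply A v) <= M) -> opnorm A <= M.
Proof.
move=> AM; apply: ge_sup => [|_ [v v_le1 <-]]; last exact: AM.
by exists (vnorm (apply A (fun=> 0))); exact: opnorm_set0.
Qed.

Lemma vnorm_apply_le (A : op) v : vnorm (apply A v) <= opnorm A * vnorm v.
Proof.
have [v0|vn0] := eqVneq (vnorm v) 0; first by rewrite v0 mulr0 vnorm_apply_eq0.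
have v_gt0 : 0 < vnorm v by rewrite lt_def vn0 vnorm_ge0.
have nc_inv : nc ((vnorm v)^-1)%:C%C = (vnorm v)^-1.
  by rewrite normc_real // invr_ge0 vnorm_ge0.
have := @opnorm_ub A (fun s => ((vnorm v)^-1)%:C%C * v s).
rewrite vnormZ nc_inv mulVf // lexx (eq_vnorm (applyZ A _ v)) vnormZ nc_inv.
by move=> /(_ isT); rewrite -ler_pdivrMr // mulrC.
Qed.

Lemma opnormD (A B : op) : opnorm (A + B) <= opnorm A + opnorm B.
Proof.
apply: opnorm_le => v v_le1; rewrite (eq_vnorm (applyD A B v)).
by apply: le_trans (vnormD _ _) _; apply: lerD; apply: opnorm_ub.
Qed.

Lemma opnormN (A : op) : opnorm (- A) <= opnorm A.
Proof.
apply: opnorm_le => v v_le1; rewrite (eq_vnorm (applyN A v)) vnormZ.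
by rewrite normcN Normc.normc1 mul1r; exact: opnorm_ub.
Qed.

Lemma opnormB (A B : op) : opnorm (A - B) <= opnorm A + opnorm B.
Proof. by apply: le_trans (opnormD _ _) _; rewrite lerD2l opnormN. Qed.

Lemma opnorm0 : opnorm (0 : op) = 0.
Proof.
apply/eqP; rewrite eq_le opnorm_ge0 andbT; apply: opnorm_le => v _.
rewrite (eq_vnorm (w := fun=> 0)) ?vnorm0 // => s.
by rewrite /apply big1 // => t _; rewrite ffunE mul0r.
Qed.

Lemma opnorm_sum (I : Type) (r : seq I) (P : pred I) (F : I -> op) :
  opnorm (\sum_(i <- r | P i) F i) <= \sum_(i <- r | P i) opnorm (F i).
Proof.
elim/big_rec2: _ => [|i x y _ Hxy]; first by rewrite opnorm0.
by apply: le_trans (opnormD _ _) _; rewrite lerD2l.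
Qed.

Lemma opnormM (A B : op) : opnorm (opmul A B) <= opnorm A * opnorm B.
Proof.
apply: opnorm_le => v v_le1; rewrite (eq_vnorm (apply_opmul A B v)).
apply: le_trans (vnorm_apply_le A _) _; rewrite ler_wpM2l ?opnorm_ge0 //.
exact: opnorm_ub.
Qed.

Lemma opnorm_comm (A B : op) : opnorm (comm A B) <= 2 * (opnorm A * opnorm B).
Proof.
apply: le_trans (opnormB _ _) _; rewrite mulr2n mulrDl mul1r.
by apply: lerD; [|rewrite mulrC]; exact: opnormM.
Qed.

End OperatorNorm.

Section Support.
Context {R : realType} {L : nat} {d : site L -> nat}.
Local Notation cfg := (config d).
Local Notation op := (Op R d).
Implicit Types (X Y Z : {set site L}) (A B : op).

Lemma supported_on_eq0 {X A} {s t : cfg} {x} :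
  supported_on X A -> x \notin X -> s x != t x -> A (s, t) = 0.
Proof. by case=> offdiag _ xX st; apply: offdiag; exists x. Qed.

Lemma supported_on_eq {X A} {s t s' t' : cfg} : supported_on X A ->
  (forall x, x \in X -> s x = s' x /\ t x = t' x) ->
  (forall x, x \notin X -> (s x == t x) = (s' x == t' x)) ->
  A (s, t) = A (s', t').
Proof.
move=> HA inX outX.
case: (boolP [exists x, (x \notin X) && (s x != t x)]) =>
    [/existsP [x /andP [xX st]]|/existsPn st].
  by rewrite (supported_on_eq0 HA xX st) (supported_on_eq0 HA xX) // -outX.
case: HA => _; apply => // x xX.
have /eqP stx : s x == t x by have := st x; rewrite xX /= negbK.
by split => //; apply/eqP; rewrite -(outX x xX) stx.
Qed.

Lemma supported_on_sub {X Y A} :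
  supported_on X A -> X \subset Y -> supported_on Y A.
Proof.
move=> HA XY; split=> [s t [x xY st]|s t s' t' inY outY].
  by apply: (supported_on_eq0 HA _ st); apply: contra xY; exact: (fintype.subsetP XY).
apply: (supported_on_eq HA) => [x xX|x xX]; first by apply: inY; exact: (fintype.subsetP XY).
case: (boolP (x \in Y)) => xY; first by have [-> ->] := inY x xY.
by have [-> ->] := outY x xY; rewrite !eqxx.
Qed.

Lemma supported_on0 X : supported_on X (0 : op).
Proof. by split=> *; rewrite !ffunE. Qed.

Lemma supported_onD X A B :
  supported_on X A -> supported_on X B -> supported_on X (A + B).
Proof.
move=> HA HB; split=> [s t [x xX st]|s t s' t' inX outX].
  by rewrite ffunE (supported_on_eq0 HA xX st) (supported_on_eq0 HB xX st) addr0.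
by case: HA HB => [_ HA] [_ HB]; rewrite !ffunE (HA s t s' t') ?(HB s t s' t').
Qed.

Lemma supported_onN X A : supported_on X A -> supported_on X (- A).
Proof.
move=> HA; split=> [s t [x xX st]|s t s' t' inX outX].
  by rewrite ffunE (supported_on_eq0 HA xX st) oppr0.
by case: HA => _ HA; rewrite !ffunE (HA s t s' t').
Qed.

Lemma supported_onB X A B :
  supported_on X A -> supported_on X B -> supported_on X (A - B).
Proof. by move=> HA HB; apply: supported_onD => //; exact: supported_onN. Qed.

Lemma supported_on_sum X (I : Type) (r : seq I) (P : pred I) (F : I -> op) :
  (forall i, P i -> supported_on X (F i)) ->
  supported_on X (\sum_(i <- r | P i) F i).
Proof.
move=> FX; elim/big_ind: _ => //; [exact: supported_on0 | exact: supported_onD].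
Qed.

(* The involution reindexing the sum of a matrix product when the outer
   configurations change outside [Z]. *)
Definition swap_off Z (s s' k : cfg) : cfg :=
  [ffun x => if x \in Z then k x else tperm (s x) (s' x) (k x)].

Lemma swap_offK Z s s' : involutive (swap_off Z s s').
Proof. by move=> k; apply/ffunP => x; rewrite !ffunE; case: (x \in Z); rewrite ?tpermK. Qed.

Lemma opmul_term_swap X Y A B (s t s' t' k : cfg) :
  supported_on X A -> supported_on Y B ->
  (forall x, x \in X :|: Y -> s x = s' x /\ t x = t' x) ->
  (forall x, x \notin X :|: Y -> s x = t x /\ s' x = t' x) ->
  A (s, k) * B (k, t) =
  A (s', swap_off (X :|: Y) s s' k) * B (swap_off (X :|: Y) s s' k, t').
Proof.
set Z := X :|: Y; set k' := swap_off Z s s' k => HA HB inZ outZ.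
have XZ x : x \in X -> x \in Z by move=> xX; rewrite inE xX.
have YZ x : x \in Y -> x \in Z by move=> xY; rewrite inE xY orbT.
have k'Z x : x \in Z -> k' x = k x by move=> xZ; rewrite ffunE xZ.
case: (boolP [exists x, (x \notin Z) && (k x != s x)]) =>
    [/existsP [x /andP [xZ ks]]|/existsPn ks].
  have xX : x \notin X by apply: contra xZ; exact: XZ.
  rewrite (supported_on_eq0 HA xX (s := s) (t := k)) 1?eq_sym // mul0r.
  rewrite (supported_on_eq0 HA xX (s := s') (t := k')) ?mul0r //.
  rewrite ffunE (negbTE xZ); apply: contra ks => /eqP k's'.
  by apply/eqP; apply: (@perm_inj _ (tperm (s x) (s' x))); rewrite tpermL -k's'.
have k_s x : x \notin Z -> k x = s x by move=> xZ; have := ks x; rewrite xZ negbK => /eqP.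
have k'_s' x : x \notin Z -> k' x = s' x.
  by move=> xZ; rewrite ffunE (negbTE xZ) k_s // tpermL.
congr (_ * _).
  apply: (supported_on_eq HA) => x xX; first by rewrite k'Z ?XZ //; case: (inZ x (XZ x xX)).
  case: (boolP (x \in Z)) => xZ; first by rewrite k'Z //; case: (inZ x xZ) => <-.
  by rewrite k'_s' // k_s // !eqxx.
apply: (supported_on_eq HB) => x xY; first by rewrite k'Z ?YZ //; case: (inZ x (YZ x xY)).
case: (boolP (x \in Z)) => xZ; first by rewrite k'Z //; case: (inZ x xZ) => _ <-.
by have [st s't'] := outZ x xZ; rewrite k'_s' // k_s // st s't' !eqxx.
Qed.

Lemma supported_on_mul {X Y A B} : supported_on X A -> supported_on Y B ->
  supported_on (X :|: Y) (opmul A B).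
Proof.
move=> HA HB; split=> [s t [x xXY st]|s t s' t' inXY outXY].
  move: xXY; rewrite inE negb_or => /andP [xX xY].
  rewrite ffunE big1 // => k _; have [ks|ks] := eqVneq (k x) (s x).
    by rewrite (supported_on_eq0 HB xY (s := k) (t := t)) ?mulr0 // ks.
  by rewrite (supported_on_eq0 HA xX (s := s) (t := k)) ?mul0r // eq_sym.
rewrite !ffunE /= [RHS](reindex_inj (can_inj (swap_offK (X :|: Y) s s'))) /=.
by apply: eq_bigr => k _; apply: opmul_term_swap.
Qed.

Lemma supported_on_comm {X Y A B} : supported_on X A -> supported_on Y B ->
  supported_on (X :|: Y) (comm A B).
Proof.
move=> HA HB; apply: supported_onB; first exact: supported_on_mul.
by rewrite finset.setUC; exact: supported_on_mul.
Qed.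

Definition mix X (s t : cfg) : cfg := [ffun x => if x \in X then s x else t x].

Lemma opmul_disjoint_entry {X Y A B} (s t : cfg) :
  supported_on X A -> supported_on Y B -> [disjoint X & Y] ->
  opmul A B (s, t) = A (s, mix X t s) * B (mix X t s, t).
Proof.
move=> HA HB XY; rewrite ffunE /= (bigD1 (mix X t s)) //= big1 ?addr0 // => k k_mix.
case: (boolP [forall x, k x == mix X t s x]) => [/forallP k_eq|/forallPn [x]].
  move: k_mix; have -> : k = mix X t s by apply/ffunP => x; apply/eqP.
  by rewrite eqxx.
rewrite ffunE; case: (boolP (x \in X)) => xX kx.
  by rewrite (supported_on_eq0 HB _ kx) ?mulr0 // (disjointFr XY xX).
by rewrite (supported_on_eq0 HA xX (t := k)) ?mul0r // eq_sym.
Qed.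

Lemma comm_disjoint {X Y A B} :
  supported_on X A -> supported_on Y B -> [disjoint X & Y] -> comm A B = 0.
Proof.
move=> HA HB XY; apply/ffunP => [[s t]].
have YX : [disjoint Y & X] by rewrite disjoint_sym.
have -> : comm A B (s, t) = opmul A B (s, t) - opmul B A (s, t) by rewrite !ffunE.
rewrite (opmul_disjoint_entry s t HA HB XY) (opmul_disjoint_entry s t HB HA YX) ffunE.
apply/eqP; rewrite subr_eq0; apply/eqP.
have XnY x : x \in X -> x \notin Y by move=> xX; rewrite (disjointFr XY xX).
have YnX x : x \in Y -> x \notin X by move=> xY; rewrite (disjointFr YX xY).
case: (boolP [exists x, [&& x \notin X, x \notin Y & s x != t x]]) =>
    [/existsP [x /and3P [xX xY st]]|/existsPn st].
  rewrite (supported_on_eq0 HB xY (t := t)) ?mulr0; last by rewrite ffunE (negbTE xX).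
  by rewrite (supported_on_eq0 HA xX (t := t)) ?mulr0 // ffunE (negbTE xY).
have s_t x : x \notin X -> x \notin Y -> s x = t x.
  by move=> xX xY; have := st x; rewrite xX xY /= negbK => /eqP.
rewrite mulrC; congr (_ * _).
  apply: (supported_on_eq HB) => x xY; rewrite !ffunE.
    by rewrite xY (negbTE (YnX x xY)).
  rewrite (negbTE xY) eqxx; case: (boolP (x \in X)) => xX; first by rewrite eqxx.
  by rewrite s_t ?eqxx.
apply: (supported_on_eq HA) => x xX; rewrite !ffunE.
  by rewrite xX (negbTE (XnY x xX)).
rewrite (negbTE xX) eqxx; case: (boolP (x \in Y)) => xY; first by rewrite eqxx.
by rewrite s_t ?eqxx.
Qed.

End Support.

Section CyclicOffset.
Context {L : nat}.
Implicit Types a b p q : 'I_L.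

(* The forward distance from [b] to [a] on the cycle [Z_L], so that [a] lies in
   the window [[b, b + r)] iff [cyc_off a b < r]; [block] is defined this way. *)
Definition cyc_off a b := ((a + L - b) %% L)%N.

Lemma cyc_offE a b :
  cyc_off a b = if (b <= a)%N then (a - b)%N else (a + L - b)%N.
Proof.
have := ltn_ord a; have := ltn_ord b; rewrite /cyc_off => bL aL.
case: (leqP b a) => ba; last by rewrite modn_small //; lia.
by rewrite (_ : a + L - b = a - b + L)%N ?modnDr ?modn_small //; lia.
Qed.

Lemma cyc_off_lt a b : (cyc_off a b < L)%N.
Proof. by have := ltn_ord a; have := ltn_ord b; rewrite cyc_offE; case: (leqP b a); lia. Qed.

Lemma cyc_offnn a : cyc_off a a = 0%N.
Proof. by rewrite cyc_offE leqnn subnn. Qed.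

Lemma cyc_offK a b : ((b + cyc_off a b) %% L)%N = a.
Proof.
have := ltn_ord a; have := ltn_ord b; rewrite cyc_offE => bL aL.
case: (leqP b a) => ba; first by rewrite subnKC // modn_small.
by rewrite (_ : b + (a + L - b) = a + L)%N ?modnDr ?modn_small //; lia.
Qed.

Lemma cyc_off_triangle p a b : (cyc_off p b <= cyc_off p a + cyc_off a b)%N.
Proof.
have := ltn_ord p; have := ltn_ord a; have := ltn_ord b; rewrite !cyc_offE.
by case: (leqP b p); case: (leqP a p); case: (leqP b a); lia.
Qed.

Lemma cyc_off_meet {q a b r r'} :
  (cyc_off q a < r)%N -> (cyc_off q b < r')%N ->
  (cyc_off b a < r)%N || (cyc_off a b < r')%N.
Proof.
have := ltn_ord q; have := ltn_ord a; have := ltn_ord b; rewrite !cyc_offE.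
by case: (leqP a q); case: (leqP b q); case: (leqP a b); case: (leqP b a); lia.
Qed.

Definition union_start r a b : 'I_L := if (cyc_off b a < r)%N then a else b.

Lemma cyc_off_union_start {q a b p r r'} :
  (cyc_off q a < r)%N -> (cyc_off q b < r')%N -> (1 <= r)%N -> (1 <= r')%N ->
  (cyc_off p a < r)%N || (cyc_off p b < r')%N ->
  (cyc_off p (union_start r a b) < r + r' - 1)%N.
Proof.
move=> qa qb r_ge1 r'_ge1 pab; have := cyc_off_meet qa qb.
rewrite /union_start; case: ifP => [ba _|_ /= ab].
  by case/orP: pab => pa; last have := cyc_off_triangle p b a; lia.
by case/orP: pab => pb; first have := cyc_off_triangle p a b; lia.
Qed.

End CyclicOffset.

Section Blocks.
Context {L : nat}.
Implicit Types (x y z : site L) (C : {set site L}).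

Lemma mem_block r x y :
  (y \in block r x) = (cyc_off y.1 x.1 < r)%N && (cyc_off y.2 x.2 < r)%N.
Proof. by rewrite inE. Qed.

Lemma mem_block_self r x : (0 < r)%N -> x \in block r x.
Proof. by move=> r_gt0; rewrite mem_block !cyc_offnn r_gt0. Qed.

Lemma mem_blocks r A :
  (r <= L)%N -> (A \in blocks L r) = (A \in [set block r x | x : site L]).
Proof. by rewrite /blocks => ->. Qed.

Lemma blockL x : block L x = [set: site L].
Proof. by apply/setP => y; rewrite mem_block inE !cyc_off_lt. Qed.

Lemma setT_in_blocks x : [set: site L] \in blocks L L.
Proof. by rewrite mem_blocks // -(blockL x); apply/imsetP; exists x. Qed.

Lemma blockU_sub r r' x y : (1 <= r)%N -> (1 <= r')%N ->
  ~~ [disjoint block r x & block r' y] ->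
  block r x :|: block r' y \subset
    block (r + r' - 1) (union_start r x.1 y.1, union_start r x.2 y.2).
Proof.
move=> r_ge1 r'_ge1 /pred0Pn [q /andP [/= qx qy]].
move: qx qy; rewrite !mem_block => /andP [qx1 qx2] /andP [qy1 qy2].
apply/fintype.subsetP => p; rewrite inE !mem_block /= => pxy.
apply/andP; split.
  by apply: (cyc_off_union_start qx1 qy1) => //; case/orP: pxy => /andP [-> _]; rewrite ?orbT.
by apply: (cyc_off_union_start qx2 qy2) => //; case/orP: pxy => /andP [_ ->]; rewrite ?orbT.
Qed.

Lemma card_block t z : (#|block t z| <= t * t)%N.
Proof.
have L_gt0 : (0 < L)%N by apply: leq_ltn_trans (ltn_ord z.1).
pose shift (b : 'I_L) (i : 'I_t) : 'I_L := Ordinal (ltn_pmod (b + i) L_gt0).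
have : block t z \subset [set (shift z.1 i.1, shift z.2 i.2) | i : 'I_t * 'I_t].
  apply/fintype.subsetP => [[a b]]; rewrite mem_block => /andP [/= az bz].
  apply/imsetP; exists (Ordinal az, Ordinal bz) => //.
  by congr pair; apply: val_inj; rewrite /= cyc_offK.
move/subset_leq_card/leq_trans; apply.
by apply: leq_trans (leq_imset_card _ _) _; rewrite card_prod card_ord.
Qed.

Lemma card_blocks_sub r C : (1 <= r)%N -> (r <= L)%N ->
  (#|[set A in blocks L r | A \subset C]| <= #|C|)%N.
Proof.
move=> r_ge1 rL.
have : [set A in blocks L r | A \subset C] \subset [set block r x | x in C].
  apply/fintype.subsetP => A; rewrite inE mem_blocks // => /andP [/imsetP [x _ ->] xC].
  by apply/imsetP; exists x => //; apply: (fintype.subsetP xC); exact: mem_block_self.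
by move/subset_leq_card/leq_trans; apply; exact: leq_imset_card.
Qed.

End Blocks.

Lemma sum_nat_ge (a n : nat) : (\sum_(0 <= i < n) (a <= i) = n - a)%N.
Proof.
elim: n => [|n IHn]; first by rewrite big_geq.
by rewrite big_nat_recr //= IHn; case: leqP; lia.
Qed.

Lemma sum_nat_eq (k n : nat) : (\sum_(0 <= i < n) (i == k) = (k < n))%N.
Proof.
elim: n => [|n IHn]; first by rewrite big_geq.
rewrite big_nat_recr //= IHn; case: (ltngtP k n) => kn /=.
- by rewrite ltnS ltnW.
- by rewrite ltnS leqNgt kn.
- by rewrite kn ltnS leqnn.
Qed.

(* For fixed [r], a value [t < L] of [minn (r + r' - 1) L] determines [r'],
   and [t = L] is reached by at most [r] values of [r' <= L]. *)
Lemma count_merged_size (r t L : nat) : (1 <= r)%N ->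
  (\sum_(1 <= r' < L.+1) (minn (r + r' - 1) L == t) <= r + 1)%N.
Proof.
move=> r_ge1.
apply: (@leq_trans (\sum_(1 <= r' < L.+1) ((L.+1 - r <= r') + (r' == t.+1 - r)))).
  rewrite big_nat_cond [leqRHS]big_nat_cond; apply: leq_sum => r' /andP [/andP [r'_ge1 _] _].
  case: eqP => //= rt; case: (leqP (L.+1 - r) r') => //= r'_lt.
  by case: eqP => //= r'_neq; lia.
rewrite big_split /=.
have sum_from1 F : (\sum_(1 <= i < L.+1) F i <= \sum_(0 <= i < L.+1) F i)%N.
  by rewrite [leqRHS](big_ltn (m := 0)) // leq_addl.
apply: leq_add; apply: leq_trans (sum_from1 _) _; first by rewrite sum_nat_ge; lia.
by rewrite sum_nat_eq; case: ltnP.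
Qed.

Section InversePowers.
Variable R : realFieldType.

Definition inv4 (r : nat) : R := (r%:R ^+ 4)^-1.

Lemma inv4_ge0 r : 0 <= inv4 r.
Proof. by rewrite invr_ge0 exprn_ge0. Qed.

Lemma inv4_telescope (x : R) : 1 <= x ->
  (x + 1) / x ^+ 4 <= 4 / x - 4 / (x + 1).
Proof.
move=> x_ge1; have x_gt0 : 0 < x by lra.
rewrite -subr_ge0.
have -> : 4 / x - 4 / (x + 1) - (x + 1) / x ^+ 4 =
    (4 * x ^+ 3 - (x + 1) ^+ 2) / (x ^+ 4 * (x + 1)).
  by field; rewrite !lt0r_neq0 ?exprn_gt0 //; lra.
apply: divr_ge0; last by rewrite mulr_ge0 ?exprn_ge0; lra.
have : 1 <= x ^+ 3 by rewrite exprn_ege1.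
rewrite !exprS expr0 !mulr1; nra.
Qed.

Lemma sum_inv4_succ (n : nat) :
  \sum_(1 <= r < n.+1) inv4 r * r.+1%:R <= 4 - 4 / n.+1%:R.
Proof.
elim: n => [|n IHn]; first by rewrite big_geq // divr1 subrr.
rewrite big_nat_recr //=.
have : 1 <= n.+1%:R :> R by rewrite ler1n.
move/inv4_telescope; move: IHn; rewrite /inv4 -[n.+2%:R]natr1 [_^-1 * _]mulrC.
set S := \sum_(_ <= _ < _) _; set a := (_ + 1) / _; set b := 4 / (_ + 1).
by set c := 4 / _; lra.
Qed.

Lemma pow4D_le (x y : R) : 0 <= x -> 0 <= y -> (x + y) ^+ 4 <= 8 * (x ^+ 4 + y ^+ 4).
Proof.
move=> x_ge0 y_ge0.
have sq2 : (x + y) ^+ 2 <= 2 * (x ^+ 2 + y ^+ 2).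
  by have := sqr_ge0 (x - y); rewrite !expr2; nra.
apply: (@le_trans _ _ ((2 * (x ^+ 2 + y ^+ 2)) ^+ 2)).
  rewrite (_ : 4%N = (2 * 2)%N) // exprM.
  by apply: lerXn2r; rewrite // nnegrE ?sqr_ge0 ?mulr_ge0 ?addr_ge0 ?sqr_ge0.
have := sqr_ge0 (x ^+ 2 - y ^+ 2).
rewrite (_ : 4%N = (2 * 2)%N) // !exprM.
set u := x ^+ 2; set v := y ^+ 2; rewrite !expr2; nra.
Qed.

Lemma inv4_merge (r r' t : nat) : (1 <= r)%N -> (1 <= r')%N -> (t <= r + r')%N ->
  t%:R ^+ 4 * (inv4 r * inv4 r') <= 8 * (inv4 r + inv4 r').
Proof.
move=> r_ge1 r'_ge1 t_le.
have r4_gt0 : 0 < r%:R ^+ 4 :> R by rewrite exprn_gt0 // ltr0n.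
have r'4_gt0 : 0 < r'%:R ^+ 4 :> R by rewrite exprn_gt0 // ltr0n.
have -> : 8 * (inv4 r + inv4 r') = 8 * (r%:R ^+ 4 + r'%:R ^+ 4) * (inv4 r * inv4 r').
  by rewrite /inv4; field; rewrite !pnatr_eq0 -!lt0n r_ge1 r'_ge1.
rewrite ler_pM2r ?mulr_gt0 ?invr_gt0 //.
apply: (@le_trans _ _ ((r%:R + r'%:R) ^+ 4)); last exact: pow4D_le.
by apply: lerXn2r; rewrite ?nnegrE ?addr_ge0 ?ler0n // -natrD ler_nat.
Qed.

Lemma sum_merged_inv4 (L t : nat) :
  \sum_(1 <= r < L.+1) \sum_(1 <= r' < L.+1)
    (if minn (r + r' - 1) L == t then 8 * inv4 r else 0) <= 32.
Proof.
apply: (@le_trans _ _ (8 * \sum_(1 <= r < L.+1) inv4 r * r.+1%:R)); last first.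
  have := sum_inv4_succ L; have : 0 <= 4 / L.+1%:R :> R by rewrite divr_ge0.
  by set w := 4 / _; set S := \sum_(_ <= _ < _) _; lra.
rewrite mulr_sumr big_nat_cond [leRHS]big_nat_cond.
apply: ler_sum => r /andP [/andP [r_ge1 _] _].
have -> : \sum_(1 <= r' < L.+1) (if minn (r + r' - 1) L == t then 8 * inv4 r else 0) =
    8 * inv4 r * (\sum_(1 <= r' < L.+1) (minn (r + r' - 1) L == t))%:R.
  rewrite natr_sum mulr_sumr; apply: eq_bigr => r' _.
  by case: (_ == t); rewrite ?mulr1 ?mulr0.
rewrite -mulrA ler_wpM2l // ler_wpM2l ?inv4_ge0 // ler_nat.
by apply: leq_trans (count_merged_size _ _ _ r_ge1) _; rewrite addn1.
Qed.

Lemma merged_inv4_sum_le (L t : nat) : (1 <= t)%N ->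
  t%:R ^+ 4 * \sum_(1 <= r < L.+1) \sum_(1 <= r' < L.+1)
     (if minn (r + r' - 1) L == t then inv4 r * inv4 r' else 0) <= 64.
Proof.
move=> t_ge1.
apply: (@le_trans _ _ (\sum_(1 <= r < L.+1) \sum_(1 <= r' < L.+1)
   ((if minn (r + r' - 1) L == t then 8 * inv4 r else 0) +
    (if minn (r' + r - 1) L == t then 8 * inv4 r' else 0)))).
  rewrite mulr_sumr big_nat_cond [leRHS]big_nat_cond.
  apply: ler_sum => r /andP [/andP [r_ge1 _] _].
  rewrite mulr_sumr big_nat_cond [leRHS]big_nat_cond.
  apply: ler_sum => r' /andP [/andP [r'_ge1 _] _].
  rewrite [(r' + r)%N]addnC; case: eqP => [rt|_]; last by rewrite mulr0 addr0.
  by rewrite -mulrDr; apply: inv4_merge; rewrite // -rt; lia.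
under eq_bigr do rewrite big_split; rewrite big_split /=.
rewrite (_ : 64 = 32 + 32 :> R); last by rewrite -natrD.
apply: lerD; first exact: sum_merged_inv4.
by rewrite exchange_big /=; exact: sum_merged_inv4.
Qed.

End InversePowers.

Section OperatorProduct.
Context {R : realType} {L : nat} {d : site L -> nat}.
Local Notation op := (Op R d).

Lemma opmulDl (A B C : op) : opmul (A + B) C = opmul A C + opmul B C.
Proof.
apply/ffunP => p; rewrite !ffunE -big_split.
by apply: eq_bigr => k _; rewrite ffunE mulrDl.
Qed.

Lemma opmulDr (A B C : op) : opmul A (B + C) = opmul A B + opmul A C.
Proof.
apply/ffunP => p; rewrite !ffunE -big_split.
by apply: eq_bigr => k _; rewrite ffunE mulrDr.
Qed.

Lemma opmul0l (A : op) : opmul 0 A = 0.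
Proof. by apply/ffunP => p; rewrite !ffunE big1 // => k _; rewrite ffunE mul0r. Qed.

Lemma opmul0r (A : op) : opmul A 0 = 0.
Proof. by apply/ffunP => p; rewrite !ffunE big1 // => k _; rewrite ffunE mulr0. Qed.

Lemma opmul_suml (I : Type) (r : seq I) (P : pred I) (F : I -> op) (B : op) :
  opmul (\sum_(i <- r | P i) F i) B = \sum_(i <- r | P i) opmul (F i) B.
Proof. exact: (big_morph (fun A => opmul A B) (fun A C => opmulDl A C B) (opmul0l B)). Qed.

Lemma opmul_sumr (I : Type) (r : seq I) (P : pred I) (F : I -> op) (A : op) :
  opmul A (\sum_(i <- r | P i) F i) = \sum_(i <- r | P i) opmul A (F i).
Proof. exact: (big_morph (fun B => opmul A B) (opmulDr A) (opmul0r A)). Qed.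

End OperatorProduct.

Lemma exchange_big3 (V : zmodType) (I1 I2 I3 : Type)
    (r1 : seq I1) (r2 : seq I2) (r3 : seq I3) (F : I1 -> I2 -> I3 -> V) :
  \sum_(i <- r1) \sum_(j <- r2) \sum_(k <- r3) F i j k =
  \sum_(k <- r3) \sum_(i <- r1) \sum_(j <- r2) F i j k.
Proof. by under eq_bigr do rewrite exchange_big; rewrite exchange_big. Qed.

Lemma sum_nat_if_eq (V : zmodType) (m n k : nat) (F : nat -> V) : (m <= k < n)%N ->
  \sum_(m <= i < n) (if i == k then F i else 0) = F k.
Proof.
move=> k_in; rewrite (bigD1_seq k) ?mem_index_iota ?iota_uniq //= eqxx.
by rewrite big1_seq ?addr0 // => i /andP [/negbTE -> _].
Qed.

Section CommutatorDecomposition.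
Context {R : realType} {L : nat} {d : site L -> nat}.
Local Notation op := (Op R d).
Local Notation bset := {set site L}.
Context {K J mu : R} {SW VW : nat -> bset -> op}.
Hypotheses (mu_ge0 : 0 <= mu) (K_ge0 : 0 <= K) (J_ge0 : 0 <= J).
Hypothesis SW_supp :
  forall r A, (1 <= r)%N -> A \in blocks L r -> supported_on A (SW r A).
Hypothesis VW_supp :
  forall r A, (1 <= r)%N -> A \in blocks L r -> supported_on A (VW r A).
Hypothesis SW_norm : forall r A, (1 <= r)%N -> A \in blocks L r ->
  opnorm (SW r A) <= K * inv4 R r * expR (- (mu * r%:R)).
Hypothesis VW_norm : forall r A, (1 <= r)%N -> A \in blocks L r ->
  opnorm (VW r A) <= J * inv4 R r * expR (- (mu * r%:R)).

Definition term r A r' B := comm (SW r A) (VW r' B).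

Definition merged_size r r' := minn (r + r' - 1) L.

Definition cover_block t (A B : bset) := [pick C in blocks L t | A :|: B \subset C].

Definition routed t C r A r' B :=
  [&& A \in blocks L r, B \in blocks L r', merged_size r r' == t,
      ~~ [disjoint A & B] & cover_block t A B == Some C].

Definition routed_term t C r A r' B : op :=
  if routed t C r A r' B then term r A r' B else 0.

Definition Wcomm t C := \sum_(1 <= r < L.+1) \sum_(A : bset)
  \sum_(1 <= r' < L.+1) \sum_(B : bset) routed_term t C r A r' B.

Lemma cover_blockP {t A B C} :
  cover_block t A B = Some C -> C \in blocks L t /\ A :|: B \subset C.
Proof. by rewrite /cover_block; case: pickP => // C' /andP [? ?] [<-]. Qed.

Lemma supported_on_Wcomm t C : supported_on C (Wcomm t C).
Proof.
rewrite /Wcomm big_nat_cond; apply: supported_on_sum => r /andP [/andP [r_ge1 _] _].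
apply: supported_on_sum => A _.
rewrite big_nat_cond; apply: supported_on_sum => r' /andP [/andP [r'_ge1 _] _].
apply: supported_on_sum => B _; rewrite /routed_term /routed.
case: (boolP [&& _, _, _, _ & _]) => [/and5P [A_blk B_blk _ _ /eqP AB_C]|_].
  have [_ ABC] := cover_blockP AB_C.
  by apply: supported_on_sub ABC; apply: supported_on_comm; [exact: SW_supp|exact: VW_supp].
exact: supported_on0.
Qed.

Lemma merged_block_exists {r r' A B} : (1 <= r <= L)%N -> (1 <= r' <= L)%N ->
  A \in blocks L r -> B \in blocks L r' -> ~~ [disjoint A & B] ->
  exists2 C, C \in blocks L (merged_size r r') & A :|: B \subset C.
Proof.
move=> /andP [r_ge1 rL] /andP [r'_ge1 r'L].
rewrite !mem_blocks // => /imsetP [x _ ->] /imsetP [y _ ->] AB; rewrite /merged_size.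
case: (leqP L (r + r' - 1)) => size_r.
  by exists [set: site L]; [exact: setT_in_blocks x|exact: finset.subsetT].
exists (block (r + r' - 1) (union_start r x.1 y.1, union_start r x.2 y.2)).
  by rewrite mem_blocks; [apply/imsetP; eexists|lia].
exact: blockU_sub.
Qed.

Lemma sum_routed_term r A r' B : (1 <= r <= L)%N -> (1 <= r' <= L)%N ->
  \sum_(1 <= t < L.+1) \sum_(C : bset) routed_term t C r A r' B =
  if (A \in blocks L r) && (B \in blocks L r') then term r A r' B else 0.
Proof.
move=> r_in r'_in.
case: ifPn => [/andP [A_blk B_blk]|AB_blk]; last first.
  rewrite big1 // => t _; rewrite big1 // => C _; rewrite /routed_term /routed.
  by case: ifP => // /and5P [A_blk B_blk _ _ _]; rewrite A_blk B_blk in AB_blk.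
have r_ge1 : (1 <= r)%N by case/andP: r_in.
have r'_ge1 : (1 <= r')%N by case/andP: r'_in.
case: (boolP [disjoint A & B]) => AB.
  rewrite /term (comm_disjoint (SW_supp _ _ r_ge1 A_blk) (VW_supp _ _ r'_ge1 B_blk) AB).
  rewrite big1 // => t _; rewrite big1 // => C _.
  by rewrite /routed_term /routed AB /= !andbF.
have [C0 C0_blk ABC0] := merged_block_exists r_in r'_in A_blk B_blk AB.
have [C1 AB_C1] : exists C1, cover_block (merged_size r r') A B = Some C1.
  rewrite /cover_block; case: pickP => [C1 _|none]; first by exists C1.
  by have := none C0; rewrite C0_blk ABC0.
have routed_eq t C : routed_term t C r A r' B =
    if t == merged_size r r' then (if C == C1 then term r A r' B else 0) else 0.
  rewrite /routed_term /routed A_blk B_blk AB /=.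
  case: (eqVneq (merged_size r r') t) => [<-|] //=; rewrite AB_C1.
  case: (eqVneq C C1) => [->|CC1]; first by rewrite eqxx.
  by case: eqP => // [[C1C]]; rewrite C1C eqxx in CC1.
have routed_sum t : \sum_(C : bset) routed_term t C r A r' B =
    if t == merged_size r r' then term r A r' B else 0.
  under eq_bigr do rewrite routed_eq.
  by case: (t == _); [rewrite -big_mkcond big_pred1_eq | rewrite big1].
under eq_bigr do rewrite routed_sum.
by rewrite sum_nat_if_eq // /merged_size; lia.
Qed.

Definition comm_terms := \sum_(1 <= r < L.+1) \sum_(A : bset)
  \sum_(1 <= r' < L.+1) \sum_(B : bset)
    if (A \in blocks L r) && (B \in blocks L r') then term r A r' B else 0.

Lemma sum_Wcomm : \sum_(1 <= t < L.+1) \sum_(C in blocks L t) Wcomm t C = comm_terms.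
Proof.
have Wcomm0 t C : C \notin blocks L t -> Wcomm t C = 0.
  move=> C_blk; rewrite /Wcomm big1 // => r _; rewrite big1 // => A _.
  rewrite big1 // => r' _; rewrite big1 // => B _; rewrite /routed_term /routed.
  case: ifP => // /and5P [_ _ _ _ /eqP /cover_blockP [C_blk' _]].
  by rewrite C_blk' in C_blk.
under eq_bigr => t _.
  rewrite big_mkcond (eq_bigr (fun C => Wcomm t C)) => [|C _]; last first.
    by case: ifPn => // /Wcomm0 ->.
  over.
rewrite /Wcomm exchange_big3.
under eq_bigr => r _ do rewrite exchange_big3.
under eq_bigr => r _ do under eq_bigr => A _ do rewrite exchange_big3.
under eq_bigr => r _ do under eq_bigr => A _ do under eq_bigr => r' _ do
  rewrite exchange_big3.
apply: eq_big_nat => r r_in; apply: eq_bigr => A _; apply: eq_big_nat => r' r'_in.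
by apply: eq_bigr => B _; apply: sum_routed_term; lia.
Qed.

Lemma comm_expand (S V : op) :
  S = \sum_(1 <= r < L.+1) \sum_(A in blocks L r) SW r A ->
  V = \sum_(1 <= r < L.+1) \sum_(A in blocks L r) VW r A ->
  comm S V = comm_terms.
Proof.
pose SA r A := if A \in blocks L r then SW r A else 0.
pose VA r A := if A \in blocks L r then VW r A else 0.
have -> : \sum_(1 <= r < L.+1) \sum_(A in blocks L r) SW r A =
    \sum_(1 <= r < L.+1) \sum_(A : bset) SA r A.
  by apply: eq_bigr => r _; rewrite big_mkcond.
have -> : \sum_(1 <= r < L.+1) \sum_(A in blocks L r) VW r A =
    \sum_(1 <= r < L.+1) \sum_(A : bset) VA r A.
  by apply: eq_bigr => r _; rewrite big_mkcond.
move=> -> ->; rewrite /comm opmul_suml opmul_sumr -sumrB; apply: eq_bigr => r _.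
rewrite opmul_suml opmul_sumr -sumrB; apply: eq_bigr => A _.
rewrite opmul_sumr opmul_suml -sumrB; apply: eq_bigr => r' _.
rewrite opmul_sumr opmul_suml -sumrB; apply: eq_bigr => B _.
rewrite /SA /VA /term /comm.
by case: (A \in _); case: (B \in _); rewrite ?opmul0l ?opmul0r ?subrr.
Qed.

Lemma term_norm_le {r A r' B} : (1 <= r)%N -> (1 <= r')%N ->
  A \in blocks L r -> B \in blocks L r' ->
  opnorm (term r A r' B) <=
    2 * K * J * (inv4 R r * inv4 R r') * expR (- (mu * (r + r')%:R)).
Proof.
move=> r_ge1 r'_ge1 A_blk B_blk; apply: le_trans (opnorm_comm _ _) _.
have := ler_pM (opnorm_ge0 _) (opnorm_ge0 _)
  (SW_norm _ _ r_ge1 A_blk) (VW_norm _ _ r'_ge1 B_blk).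
rewrite natrD mulrDr opprD expRD -(ler_pM2l (ltr0Sn _ 1)) => /le_trans; apply.
by rewrite le_eqVlt; apply/orP; left; apply/eqP; ring.
Qed.

Definition in_block_ind r (C A : bset) : R :=
  if (A \in blocks L r) && (A \subset C) then 1 else 0.

Lemma in_block_ind_ge0 r C A : 0 <= in_block_ind r C A.
Proof. by rewrite /in_block_ind; case: ifP. Qed.

Lemma sum_in_block_ind_le r t C : (1 <= r <= L)%N -> C \in blocks L t ->
  \sum_(A : bset) in_block_ind r C A <= t%:R ^+ 2.
Proof.
move=> /andP [r_ge1 rL] C_blk; rewrite /in_block_ind -big_mkcond /= sumr_const.
rewrite -natrX ler_nat; have := card_blocks_sub _ C r_ge1 rL.
rewrite cardsE => /leq_trans; apply.
move: C_blk; rewrite /blocks; case: ifP => [tL|]; last by rewrite inE.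
by move=> /imsetP [z _ ->]; rewrite expnS expn1 card_block.
Qed.

Lemma routed_term_norm_le t C r A r' B : (1 <= r)%N -> (1 <= r')%N ->
  opnorm (routed_term t C r A r' B) <=
    in_block_ind r C A * in_block_ind r' C B *
    (2 * K * J * expR (- (mu * t%:R)) *
     if merged_size r r' == t then inv4 R r * inv4 R r' else 0).
Proof.
move=> r_ge1 r'_ge1; rewrite /routed_term /routed.
case: ifP => [/and5P [A_blk B_blk /eqP rt _ /eqP AB_C]|_]; last first.
  rewrite opnorm0 !mulr_ge0 ?in_block_ind_ge0 ?expR_ge0 //.
  by case: ifP; rewrite ?mulr_ge0 ?inv4_ge0.
have [_ ABC] := cover_blockP AB_C.
rewrite /in_block_ind A_blk B_blk (fintype.subset_trans (finset.subsetUl A B) ABC).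
rewrite (fintype.subset_trans (finset.subsetUr A B) ABC) rt eqxx !mul1r.
apply: le_trans (term_norm_le r_ge1 r'_ge1 A_blk B_blk) _.
rewrite mulrAC ler_wpM2r ?mulr_ge0 ?inv4_ge0 // ler_wpM2l ?mulr_ge0 //.
rewrite ler_expR lerN2 ler_wpM2l // ler_nat.
by rewrite -rt /merged_size; lia.
Qed.

Lemma Wcomm_norm_le {t C} : (1 <= t)%N -> C \in blocks L t ->
  opnorm (Wcomm t C) <= 128 * K * J * expR (- (mu * t%:R)).
Proof.
move=> t_ge1 C_blk.
pose M := 2 * K * J * expR (- (mu * t%:R)).
pose h r r' : R := if merged_size r r' == t then inv4 R r * inv4 R r' else 0.
pose n r := \sum_(A : bset) in_block_ind r C A.
have M_ge0 : 0 <= M by rewrite !mulr_ge0 ?expR_ge0.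
have h_ge0 r r' : 0 <= h r r' by rewrite /h; case: ifP; rewrite ?mulr_ge0 ?inv4_ge0.
have n_ge0 r : 0 <= n r by apply: sumr_ge0 => A _; exact: in_block_ind_ge0.
apply: (@le_trans _ _ (M * \sum_(1 <= r < L.+1) \sum_(1 <= r' < L.+1) h r r' * (n r * n r'))).
  apply: (@le_trans _ _ (\sum_(1 <= r < L.+1) \sum_(A : bset) \sum_(1 <= r' < L.+1)
      \sum_(B : bset) in_block_ind r C A * in_block_ind r' C B * (M * h r r'))).
    rewrite /Wcomm; apply: le_trans (opnorm_sum _ _ _ _) _; apply: ler_sum_nat => r r_in.
    apply: le_trans (opnorm_sum _ _ _ _) _; apply: ler_sum => A _.
    apply: le_trans (opnorm_sum _ _ _ _) _; apply: ler_sum_nat => r' r'_in.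
    apply: le_trans (opnorm_sum _ _ _ _) _; apply: ler_sum => B _.
    by apply: routed_term_norm_le; lia.
  rewrite le_eqVlt; apply/orP; left; apply/eqP.
  rewrite mulr_sumr; apply: eq_bigr => r _; rewrite exchange_big /= mulr_sumr.
  apply: eq_bigr => r' _; rewrite /n big_distrlr /= !mulr_sumr; apply: eq_bigr => A _.
  by rewrite !mulr_sumr; apply: eq_bigr => B _; ring.
rewrite (_ : 128 * K * J * _ = M * 64); last by rewrite /M; ring.
rewrite ler_wpM2l //; apply: (@le_trans _ _
  (t%:R ^+ 4 * \sum_(1 <= r < L.+1) \sum_(1 <= r' < L.+1) h r r')); last first.
  exact: merged_inv4_sum_le.
rewrite mulr_sumr; apply: ler_sum_nat => r r_in; rewrite mulr_sumr.
apply: ler_sum_nat => r' r'_in; rewrite [leRHS]mulrC ler_wpM2l //.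
rewrite -[4%N]/(2 + 2)%N exprD.
have tL : (t <= L)%N by move: C_blk; rewrite /blocks; case: ifP; rewrite ?inE.
by apply: ler_pM => //; apply: sum_in_block_ind_le => //; lia.
Qed.

Lemma comm_decaying (S V : op) :
  S = \sum_(1 <= r < L.+1) \sum_(A in blocks L r) SW r A ->
  V = \sum_(1 <= r < L.+1) \sum_(A in blocks L r) VW r A ->
  decaying (128 * K * J) mu 0 (comm S V).
Proof.
move=> S_sum V_sum; exists Wcomm; split; [split|].
- by move=> t C _ _; exact: supported_on_Wcomm.
- by rewrite sum_Wcomm; exact: comm_expand.
move=> t C t_ge1 C_blk; rewrite powRr0 mulr1.
apply: le_trans (ler_wpM2r (expR_ge0 _) (Wcomm_norm_le t_ge1 C_blk)) _.
by rewrite -(mulrA (128 * K * J)) -expRD addNr expR0 mulr1.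
Qed.

End CommutatorDecomposition.

Lemma decomp_decaying_norm_le {R : realType} {L : nat} {d : site L -> nat}
    {K mu alpha : R} {W : nat -> {set site L} -> Op R d} :
  4 <= alpha -> decomp_decaying K mu alpha W ->
  forall r A, (1 <= r)%N -> A \in blocks L r ->
  opnorm (W r A) <= K * inv4 R r * expR (- (mu * r%:R)).
Proof.
move=> alpha_ge4 W_dec r A r_ge1 A_blk.
have r_ge1' : 1 <= r%:R :> R by rewrite ler1n.
have r4_gt0 : 0 < r%:R ^+ 4 :> R by rewrite exprn_gt0 // (lt_le_trans ltr01).
have r4_le : r%:R ^+ 4 <= powR r%:R alpha :> R.
  by rewrite -powR_mulrn ?ler0n //; exact: ler_powR.
rewrite /inv4 expRN -mulrA -invfM ler_pdivlMr ?mulr_gt0 ?expR_gt0 ?ltr0n //.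
apply: le_trans (W_dec r A r_ge1 A_blk); rewrite mulrA ler_wpM2r ?expR_ge0 //.
by rewrite ler_wpM2l ?opnorm_ge0.
Qed.

Lemma decomp_decaying_ge0 {R : realType} {L : nat} {d : site L -> nat}
    {K mu alpha : R} {W : nat -> {set site L} -> Op R d} :
  (0 < L)%N -> decomp_decaying K mu alpha W -> 0 <= K.
Proof.
move=> L_gt0 W_dec; pose x : site L := (Ordinal L_gt0, Ordinal L_gt0).
have x_blk : block 1 x \in blocks L 1 by rewrite mem_blocks //; apply/imsetP; exists x.
apply: le_trans (W_dec 1%N _ (leqnn 1) x_blk).
by rewrite !mulr_ge0 ?opnorm_ge0 ?powR_ge0 ?expR_ge0.
Qed.

Theorem lemma5 (R : realType) (alpha beta : R) :
  4 <= alpha -> 4 <= beta ->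
  exists c : R,
    forall (L : nat) (d : site L -> nat) (K J mu : R) (S V : Op R d),
      (0 < L)%N -> 0 <= mu ->
      decaying K mu alpha S -> decaying J mu beta V ->
      decaying (c * K * J) mu 0 (comm S V).
Proof.
move=> alpha_ge4 beta_ge4; exists 128.
move=> L d K J mu S V L_gt0 mu_ge0 [SW [[SW_supp S_sum] SW_dec]] [VW [[VW_supp V_sum] VW_dec]].
apply: (comm_decaying mu_ge0 (decomp_decaying_ge0 L_gt0 SW_dec)
  (decomp_decaying_ge0 L_gt0 VW_dec) SW_supp VW_supp) S_sum V_sum.
- exact: decomp_decaying_norm_le alpha_ge4 SW_dec.
- exact: decomp_decaying_norm_le beta_ge4 VW_dec.
Qed.
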